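(* Let $\mathcal{C}$ be a regular category, $n \ge 0$, and consider a belief cycle \[ A \xrightarrow{R_1} A_1 \xrightarrow{R_2} \cdots \xrightarrow{R_n} A_n \xrightarrow{R_{n+1}} A \] where each $R_k$ is a subobject of the product of its source and target (with $A_0 = A_{n+1} = A$). Suppose that for each subobject $p$ of $A$ there is $c : \mathbf{1} \to A$ such that, writing $y_0 = c$, the following regular sequents are valid in $\mathcal{C}$ (variables $y_k$ of sort $A_k$, $x$ of sort $A$): (i) $R_1(y_0,y_1) \wedge \cdots \wedge R_n(y_{n-1},y_n) \wedge R_{n+1}(y_n,x) \vdash p(x)$; (ii) $R_1(y_0,y_1) \wedge \cdots \wedge R_n(y_{n-1},y_n) \wedge p(x) \vdash R_{n+1}(y_n,x)$; (iii) for each $k = 1,\dots,n$: $R_1(y_0,y_1) \wedge \cdots \wedge R_{k-1}(y_{k-2},y_{k-1}) \vdash \exists y_k.\, R_k(y_{k-1},y_k)$; (i.e. $c \models \Box_1\cdots\Box_n \boxplus_{n+1} p \wedge \Diamond_1\top \wedge \Box_1\Diamond_2\top \wedge\cdots\wedge \Box_1\cdots\Box_{n-1}\Diamond_n\top$). Let $R = R_1;\cdots;R_{n+1}$ be the relational composite, the subobject of $A\times A$ interpreting $\exists y_1\cdots\exists y_n.\,[R_1(x,y_1)\wedge R_2(y_1,y_2)\wedge\cdots\wedge R_{n+1}(y_n,x')]$. Then $R$ is very weakly point surjective: for every subobject $p$ of $A$ there is $c:\mathbf{1}\to A$ with $\langle c,c\rangle^*(R) = c^*(p)$ in $\mathsf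{Sub}(\mathbf{1})$.
   Context: A regular category is a well-powered category with finite limits and images stable under pullback, with terminal object $\mathbf{1}$; $\mathsf{Sub}(A)$ is the poset of subobjects of $A$ and $f^*$ is pullback along $f$. Regular formulas are interpreted as subobjects (relation symbols by the given subobjects, substitution by pullback, conjunction by meet, $\exists$ along projections by the left adjoint to pullback); a sequent $\phi\vdash\psi$ in the listed variables is valid if $[\![\phi]\!]\le[\![\psi]\!]$ in the subobject poset of the product of the sorts of the variables. The modalities: $x\models\Box_k\phi$ iff $\forall y.\,R_k(x,y)\Rightarrow \phi(y)$; $x\models\boxplus_k\phi$ iff $\forall y.\,R_k(x,y)\Leftrightarrow\phi(y)$; $x\models\Diamond_k\top$ iff $\exists y.\,R_k(x,y)$. *)

Set Implicit Arguments.
Unset Strict Implicit.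

Record Category := {
  ob :> Type;
  hom : ob -> ob -> Type;
  idm : forall A, hom A A;
  comp : forall A B C, hom B C -> hom A B -> hom A C;
  comp_idl : forall A B (f : hom A B), comp (idm B) f = f;
  comp_idr : forall A B (f : hom A B), comp f (idm A) = f;
  comp_assoc : forall A B C D (h : hom C D) (g : hom B C) (f : hom A B),
      comp h (comp g f) = comp (comp h g) f
}.
Arguments hom {c} _ _.
Arguments idm {c} _.
Arguments comp {c A B C} _ _.

Definition mono (C : Category) (A B : C) (f : hom A B) : Prop :=
  forall X (u v : hom X A), comp f u = comp f v -> u = v.

Definition factors (C : Category) (A B X : C) (f : hom A X) (g : hom B X) : Prop :=
  exists h : hom A B, comp g h = f.

(** Subobjects: monos into X, compared by factorization; the poset Sub(X)
    is the quotient of this preorder, so equality in Sub(X) is [sub_eq]. *)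
Record Sub (C : Category) (X : C) := {
  sdom : C;
  sarr : hom sdom X;
  smono : mono sarr
}.
Arguments sdom {C X} _.
Arguments sarr {C X} _.
Arguments smono {C X} _ : rename.

Definition sub_le (C : Category) (X : C) (m n : Sub X) : Prop :=
  factors (sarr m) (sarr n).
Definition sub_eq (C : Category) (X : C) (m n : Sub X) : Prop :=
  sub_le m n /\ sub_le n m.

(** * Regular categories:
   finite limits (terminal object, binary products, pullbacks),
   images (least subobject through which a map factors),
   images stable under pullback.  (Well-poweredness is a size condition
   with no content in type theory.) *)
Record RegCat := {
  cat :> Category;
  one : cat;
  bang : forall X : cat, hom X one;
  bang_uniq : forall X (f g : hom X one), f = g;
  prod : cat -> cat -> cat;
  pfst : forall A B, hom (prod A B) A;
  psnd : forall A B, hom (prod A B) B;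
  pair : forall X A B, hom X A -> hom X B -> hom X (prod A B);
  pair_fst : forall X A B (f : hom X A) (g : hom X B), comp (pfst A B) (pair f g) = f;
  pair_snd : forall X A B (f : hom X A) (g : hom X B), comp (psnd A B) (pair f g) = g;
  pair_uniq : forall X A B (h k : hom X (prod A B)),
      comp (pfst A B) h = comp (pfst A B) k -> comp (psnd A B) h = comp (psnd A B) k -> h = k;
  pb : forall A B Z, hom A Z -> hom B Z -> cat;
  pb1 : forall A B Z (f : hom A Z) (g : hom B Z), hom (pb f g) A;
  pb2 : forall A B Z (f : hom A Z) (g : hom B Z), hom (pb f g) B;
  pb_comm : forall A B Z (f : hom A Z) (g : hom B Z), comp f (pb1 f g) = comp g (pb2 f g);
  pb_ex : forall A B Z (f : hom A Z) (g : hom B Z) Y (h : hom Y A) (k : hom Y B),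
      comp f h = comp g k -> exists u : hom Y (pb f g), comp (pb1 f g) u = h /\ comp (pb2 f g) u = k;
  pb_uniq : forall A B Z (f : hom A Z) (g : hom B Z) Y (u v : hom Y (pb f g)),
      comp (pb1 f g) u = comp (pb1 f g) v -> comp (pb2 f g) u = comp (pb2 f g) v -> u = v;
  im : forall X A (f : hom A X), Sub X;
  im_fact : forall X A (f : hom A X), factors f (sarr (im f));
  im_least : forall X A (f : hom A X) (m : Sub X), factors f (sarr m) -> sub_le (im f) m;
  (* f^*(im g) = im (f^* g) *)
  im_stable : forall X Y A (f : hom X Y) (g : hom A Y),
      factors (sarr (im (pb1 f g))) (pb1 f (sarr (im g))) /\
      factors (pb1 f (sarr (im g))) (sarr (im (pb1 f g)))
}.
Arguments one {r}.
Arguments bang {r} _.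
Arguments prod {r} _ _.
Arguments pfst {r A B}.
Arguments psnd {r A B}.
Arguments pair {r X A B} _ _.
Arguments pb {r A B Z} _ _.
Arguments pb1 {r A B Z} _ _.
Arguments pb2 {r A B Z} _ _.
Arguments im {r X A} _.

Lemma pb1_mono (C : RegCat) (A B Z : C) (f : hom A Z) (g : hom B Z) :
  mono g -> mono (pb1 f g).
Proof.
  intros Hg X u v E. apply pb_uniq; [exact E|].
  apply Hg. rewrite !comp_assoc, <- !pb_comm, <- !comp_assoc, E. reflexivity.
Qed.

Arguments pb1_mono {C A B Z} f {g} _.

Lemma comp_mono (C : Category) (A B D : C) (g : hom B D) (f : hom A B) :
  mono g -> mono f -> mono (comp g f).
Proof.
  intros Hg Hf X u v E. apply Hf, Hg. rewrite !comp_assoc. exact E.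
Qed.

Lemma id_mono (C : Category) (A : C) : mono (idm A).
Proof. intros X u v E. rewrite !comp_idl in E. exact E. Qed.

Definition pbsub (C : RegCat) (X Y : C) (f : hom X Y) (m : Sub Y) : Sub X :=
  {| sdom := pb f (sarr m); sarr := pb1 f (sarr m); smono := pb1_mono f (smono m) |}.

Definition meet (C : RegCat) (X : C) (m n : Sub X) : Sub X :=
  {| sdom := pb (sarr m) (sarr n);
     sarr := comp (sarr m) (pb1 (sarr m) (sarr n));
     smono := comp_mono (smono m) (pb1_mono (sarr m) (smono n)) |}.

Definition top (C : RegCat) (X : C) : Sub X :=
  {| sdom := X; sarr := idm X; smono := @id_mono C X |}.

Definition exs (C : RegCat) (X Y : C) (f : hom X Y) (m : Sub X) : Sub Y :=
  im (comp f (sarr m)).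

(** * Belief cycles  A -R_1-> A_1 -> ... -> A_n -R_{n+1}-> A.
   Objects: A_0 = A, A_{k+1} = Bs k.  Relations R_{k+1} = Rs k : Sub (A_k x A_{k+1})
   for k < n, and R_{n+1} = Rlast : Sub (A_n x A). *)
Definition Aobj (C : RegCat) (A : C) (Bs : nat -> C) (k : nat) : C :=
  match k with 0 => A | S j => Bs j end.

(** Context  X x A_1 x ... x A_k  (variables y_1..y_k over a base X). *)
Fixpoint Ctx (C : RegCat) (A : C) (Bs : nat -> C) (X : C) (k : nat) : C :=
  match k with
  | 0 => X
  | S j => prod (Ctx A Bs X j) (Aobj A Bs (S j))
  end.

(** the last variable y_k of the context; y_0 is given by s : X -> A *)
Definition lastv (C : RegCat) (A : C) (Bs : nat -> C) (X : C) (s : hom X A) (k : nat)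
  : hom (Ctx A Bs X k) (Aobj A Bs k) :=
  match k as k0 return hom (Ctx A Bs X k0) (Aobj A Bs k0) with
  | 0 => s
  | S j => psnd
  end.

Fixpoint basev (C : RegCat) (A : C) (Bs : nat -> C) (X : C) (k : nat)
  : hom (Ctx A Bs X k) X :=
  match k as k0 return hom (Ctx A Bs X k0) X with
  | 0 => idm X
  | S j => comp (basev A Bs X j) pfst
  end.

(** R_1(y_0,y_1) /\ ... /\ R_k(y_{k-1},y_k)  as a subobject of the context *)
Fixpoint chain (C : RegCat) (A : C) (Bs : nat -> C)
    (Rs : forall k, Sub (prod (Aobj A Bs k) (Aobj A Bs (S k))))
    (X : C) (s : hom X A) (k : nat) : Sub (Ctx A Bs X k) :=
  match k as k0 return Sub (Ctx A Bs X k0) with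
  | 0 => top X
  | S j => meet (pbsub pfst (chain Rs s j))
                (pbsub (pair (comp (lastv Bs s j) pfst) psnd) (Rs j))
  end.

(** R_1(y_0,y_1) /\ ... /\ R_n(y_{n-1},y_n) /\ R_{n+1}(y_n,x)
    in context (X x A_1 x ... x A_n) x A *)
Definition fullchain (C : RegCat) (A : C) (Bs : nat -> C) (n : nat)
    (Rs : forall k, Sub (prod (Aobj A Bs k) (Aobj A Bs (S k))))
    (Rlast : Sub (prod (Aobj A Bs n) A))
    (X : C) (s : hom X A) : Sub (prod (Ctx A Bs X n) A) :=
  meet (pbsub pfst (chain Rs s n))
       (pbsub (pair (comp (lastv Bs s n) pfst) psnd) Rlast).

(** Relational composite R_1;...;R_{n+1} : Sub (A x A), interpreting
    exists y_1..y_n. R_1(x,y_1) /\ ... /\ R_{n+1}(y_n,x') *)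
Definition rel_composite (C : RegCat) (A : C) (Bs : nat -> C) (n : nat)
    (Rs : forall k, Sub (prod (Aobj A Bs k) (Aobj A Bs (S k))))
    (Rlast : Sub (prod (Aobj A Bs n) A)) : Sub (prod A A) :=
  exs (pair (comp (basev A Bs A n) pfst) psnd) (fullchain Rs Rlast (idm A)).

Definition belief_hyp (C : RegCat) (A : C) (Bs : nat -> C) (n : nat)
    (Rs : forall k, Sub (prod (Aobj A Bs k) (Aobj A Bs (S k))))
    (Rlast : Sub (prod (Aobj A Bs n) A)) (p : Sub A) (c : hom one A) : Prop :=
  sub_le (fullchain Rs Rlast c) (pbsub psnd p) /\
  sub_le (meet (pbsub pfst (chain Rs c n)) (pbsub psnd p))
         (pbsub (pair (comp (lastv Bs c n) pfst) psnd) Rlast) /\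
  (* (iii) for k = j+1, j < n *)
  (forall j, j < n ->
     sub_le (chain Rs c j)
            (exs pfst (pbsub (pair (comp (lastv Bs c j) pfst) psnd) (Rs j)))).

Definition very_weakly_point_surjective (C : RegCat) (A : C) (R : Sub (prod A A)) : Prop :=
  forall p : Sub A, exists c : hom one A, sub_eq (pbsub (pair c c) R) (pbsub c p).

(* Work with generalized elements: [x : T -> X] satisfies a subobject [m] when it
   factors through it.  Conjunction and pullback are then computed pointwise, and
   stability of images makes [exists] local: a witness exists after passing to a
   cover of the stage.  Hypothesis (iii) builds, locally over c^*(p), a chain
   [R_1(c, y_1) /\ ... /\ R_n(y_(n-1), y_n)]; (ii) closes it with [R_(n+1)(y_n, c)],
   so c^*(p) <= <c,c>^*(R).  Conversely, a local witness of <c,c>^*(R) is a full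
   chain from c back to c, which lies in p by (i); covers reflect this. *)
From Stdlib Require Import Lia.
Set Implicit Arguments.
Unset Strict Implicit.

Section Internal_logic.
Variable C : RegCat.

Definition sat (X T : C) (m : Sub X) (x : hom T X) : Prop := factors x (sarr m).

Lemma sat_comp (X T U : C) (m : Sub X) (x : hom T X) (h : hom U T) :
  sat m x -> sat m (comp x h).
Proof. intros [u Hu]. exists (comp u h). rewrite comp_assoc, Hu. reflexivity. Qed.

Lemma sat_le (X T : C) (m n : Sub X) (x : hom T X) : sub_le m n -> sat m x -> sat n x.
Proof. intros [a Ha] [u Hu]. exists (comp a u). rewrite comp_assoc, Ha, Hu. reflexivity. Qed.

Lemma sat_self (X : C) (m : Sub X) : sat m (sarr m).
Proof. exists (idm _). apply comp_idr. Qed.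

Lemma sat_top (X T : C) (x : hom T X) : sat (top X) x.
Proof. exists x. apply comp_idl. Qed.

Lemma sat_pb (X Y T : C) (f : hom X Y) (m : Sub Y) (x : hom T X) :
  sat (pbsub f m) x <-> sat m (comp f x).
Proof.
  split.
  - intros [u Hu]. exists (comp (pb2 f (sarr m)) u). simpl in Hu.
    rewrite comp_assoc, <- pb_comm, <- comp_assoc, Hu. reflexivity.
  - intros [u Hu]. destruct (pb_ex (eq_sym Hu)) as [v [Hv _]]. exists v. exact Hv.
Qed.

Lemma sat_meet (X T : C) (m n : Sub X) (x : hom T X) :
  sat (meet m n) x <-> sat m x /\ sat n x.
Proof.
  split.
  - intros [u Hu]. simpl in Hu. split.
    + exists (comp (pb1 (sarr m) (sarr n)) u). rewrite comp_assoc. exact Hu.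
    + exists (comp (pb2 (sarr m) (sarr n)) u). rewrite comp_assoc, <- pb_comm. exact Hu.
  - intros [[a Ha] [b Hb]].
    assert (E : comp (sarr m) a = comp (sarr n) b) by (rewrite Ha, Hb; reflexivity).
    destruct (pb_ex E) as [v [Hv _]].
    exists v. simpl. rewrite <- comp_assoc, Hv. exact Ha.
Qed.

Lemma sat_exs_intro (X Y T : C) (f : hom X Y) (m : Sub X) (x : hom T X) :
  sat m x -> sat (exs f m) (comp f x).
Proof.
  intros [u Hu]. destruct (im_fact (comp f (sarr m))) as [h Hh].
  exists (comp h u). unfold exs. rewrite comp_assoc, Hh, <- comp_assoc, Hu. reflexivity.
Qed.

Lemma pair_comp (X Y P Q : C) (f : hom X P) (g : hom X Q) (h : hom Y X) :
  comp (pair f g) h = pair (comp f h) (comp g h).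
Proof. apply pair_uniq; rewrite ?comp_assoc, ?pair_fst, ?pair_snd; reflexivity. Qed.

Lemma pair_eta (X P Q : C) (z : hom X (prod P Q)) : pair (comp pfst z) (comp psnd z) = z.
Proof. apply pair_uniq; rewrite ?pair_fst, ?pair_snd; reflexivity. Qed.

Lemma pair_inj (X P Q : C) (f f' : hom X P) (g g' : hom X Q) :
  pair f g = pair f' g' -> f = f' /\ g = g'.
Proof.
  intros E. split.
  - rewrite <- (pair_fst f g), E. apply pair_fst.
  - rewrite <- (pair_snd f g), E. apply pair_snd.
Qed.

(* In a regular category these are exactly the regular epimorphisms. *)
Definition cover (T Y : C) (t : hom T Y) : Prop := sat (im t) (idm Y).

Lemma sat_cover (T Y Z : C) (t : hom T Y) (x : hom Y Z) (m : Sub Z) :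
  cover t -> sat m (comp x t) -> sat m x.
Proof.
  intros Ht Hxt. apply sat_pb in Hxt.
  rewrite <- comp_idr. apply sat_pb. exact (sat_le (im_least Hxt) Ht).
Qed.

Lemma cover_id (Y : C) : cover (idm Y).
Proof. exact (im_fact (idm Y)). Qed.

Lemma cover_comp (T1 T2 T3 : C) (t2 : hom T2 T3) (t1 : hom T1 T2) :
  cover t2 -> cover t1 -> cover (comp t2 t1).
Proof.
  intros H2 H1. apply (sat_cover H2). rewrite comp_idl.
  apply (sat_cover H1). apply im_fact.
Qed.

Lemma sat_exs_elim (X Y T : C) (f : hom X Y) (m : Sub X) (x : hom T Y) :
  sat (exs f m) x ->
  exists T' (t : hom T' T) (y : hom T' X), cover t /\ sat m y /\ comp x t = comp f y.
Proof.
  intros Hx. set (g := comp f (sarr m)).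
  exists (pb x g), (pb1 x g), (comp (sarr m) (pb2 x g)). split; [|split].
  - apply (@sat_le _ _ (pbsub x (im g))); [exact (proj2 (im_stable x g))|].
    apply sat_pb. rewrite comp_idr. exact Hx.
  - apply sat_comp, sat_self.
  - rewrite pb_comm. apply eq_sym, comp_assoc.
Qed.

End Internal_logic.

Section Belief_cycle.
Variables (C : RegCat) (A : C) (Bs : nat -> C).

(* The substitution [y_0 := f(y_0)] on contexts, i.e. [f x id x ... x id]. *)
Fixpoint ctx_map (X Y : C) (f : hom X Y) (k : nat) : hom (Ctx A Bs X k) (Ctx A Bs Y k) :=
  match k as k0 return hom (Ctx A Bs X k0) (Ctx A Bs Y k0) with
  | 0 => f
  | S j => pair (comp (ctx_map f j) pfst) psnd
  end.

Fixpoint ctx_lift (X Y T : C) (k : nat) :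
  hom T (Ctx A Bs Y k) -> hom T X -> hom T (Ctx A Bs X k) :=
  match k as k0 return hom T (Ctx A Bs Y k0) -> hom T X -> hom T (Ctx A Bs X k0) with
  | 0 => fun _ b => b
  | S j => fun w b => pair (@ctx_lift X Y T j (comp pfst w) b) (comp psnd w)
  end.

Lemma basev_ctx_map (X Y : C) (f : hom X Y) (k : nat) :
  comp (basev A Bs Y k) (ctx_map f k) = comp f (basev A Bs X k).
Proof.
  induction k as [|k IH]; simpl.
  - rewrite comp_idl, comp_idr. reflexivity.
  - rewrite <- comp_assoc, pair_fst, comp_assoc, IH. apply eq_sym, comp_assoc.
Qed.

Lemma lastv_ctx_map (X Y : C) (s : hom Y A) (f : hom X Y) (k : nat) :
  comp (lastv Bs s k) (ctx_map f k) = lastv Bs (comp s f) k.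
Proof. destruct k; simpl; [reflexivity | apply pair_snd]. Qed.

Lemma ctx_map_lift (X Y T : C) (f : hom X Y) (k : nat) (w : hom T (Ctx A Bs Y k)) (b : hom T X) :
  comp f b = comp (basev A Bs Y k) w -> comp (ctx_map f k) (ctx_lift w b) = w.
Proof.
  revert w. induction k as [|k IH]; intros w Hb; simpl in *.
  - rewrite Hb. apply comp_idl.
  - rewrite pair_comp, <- comp_assoc, pair_fst, pair_snd, IH; [apply pair_eta|].
    rewrite Hb. apply eq_sym, comp_assoc.
Qed.

Variable Rs : forall k, Sub (prod (Aobj A Bs k) (Aobj A Bs (S k))).

Lemma sat_chain_S (X T : C) (s : hom X A) (k : nat)
    (w : hom T (prod (Ctx A Bs X k) (Aobj A Bs (S k)))) :
  sat (chain Rs s (S k)) w <->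
  sat (chain Rs s k) (comp pfst w) /\
  sat (Rs k) (pair (comp (lastv Bs s k) (comp pfst w)) (comp psnd w)).
Proof.
  simpl chain. rewrite sat_meet, !sat_pb, pair_comp, <- comp_assoc. reflexivity.
Qed.

Lemma sat_chain_ctx_map (X Y T : C) (s : hom Y A) (f : hom X Y) (k : nat)
    (w : hom T (Ctx A Bs X k)) :
  sat (chain Rs (comp s f) k) w <-> sat (chain Rs s k) (comp (ctx_map f k) w).
Proof.
  revert T w. induction k as [|k IH]; intros T w.
  - simpl. split; intros; apply sat_top.
  - rewrite !sat_chain_S, IH. cbn [ctx_map Ctx] in *.
    rewrite !comp_assoc, pair_fst, pair_snd, <- (comp_assoc (lastv Bs s k)), pair_fst,
      comp_assoc, lastv_ctx_map.
    reflexivity.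
Qed.

Variables (n : nat) (Rlast : Sub (prod (Aobj A Bs n) A)).

Lemma sat_fullchain (X T : C) (s : hom X A) (w : hom T (Ctx A Bs X n)) (x : hom T A) :
  sat (fullchain Rs Rlast s) (pair w x) <->
  sat (chain Rs s n) w /\ sat Rlast (pair (comp (lastv Bs s n) w) x).
Proof.
  unfold fullchain. rewrite sat_meet, !sat_pb, !pair_comp, <- comp_assoc, !pair_fst, pair_snd.
  reflexivity.
Qed.

Lemma sat_fullchain_ctx_map (X T : C) (f : hom X A) (w : hom T (Ctx A Bs X n)) (x : hom T A) :
  sat (fullchain Rs Rlast f) (pair w x) <->
  sat (fullchain Rs Rlast (idm A)) (pair (comp (ctx_map f n) w) x).
Proof.
  rewrite !sat_fullchain, <- (sat_chain_ctx_map (idm A)), comp_assoc, lastv_ctx_map, comp_idl.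
  reflexivity.
Qed.

Lemma rel_composite_intro (c : hom one A) (T : C) (b : hom T one) (w : hom T (Ctx A Bs one n)) :
  sat (fullchain Rs Rlast c) (pair w (comp c b)) ->
  sat (rel_composite Rs Rlast) (comp (pair c c) b).
Proof.
  intros Hw. apply sat_fullchain_ctx_map in Hw.
  replace (comp (pair c c) b)
    with (comp (pair (comp (basev A Bs A n) pfst) psnd) (pair (comp (ctx_map c n) w) (comp c b))).
  { apply sat_exs_intro. exact Hw. }
  rewrite !pair_comp, <- comp_assoc, pair_fst, pair_snd, comp_assoc, basev_ctx_map,
    <- comp_assoc, (bang_uniq (comp _ w) b).
  reflexivity.
Qed.

Lemma rel_composite_elim (c : hom one A) (T : C) (b : hom T one) :
  sat (rel_composite Rs Rlast) (comp (pair c c) b) ->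
  exists T' (t : hom T' T) (w : hom T' (Ctx A Bs one n)),
    cover t /\ sat (fullchain Rs Rlast c) (pair w (comp c (comp b t))).
Proof.
  intros H. destruct (sat_exs_elim H) as [T' [t [z [Ht [Hz Ezt]]]]].
  rewrite <- comp_assoc, !pair_comp, <- comp_assoc in Ezt.
  destruct (pair_inj Ezt) as [Hbase Hlast].
  exists T', t, (ctx_lift (comp pfst z) (comp b t)). split; [exact Ht|].
  apply sat_fullchain_ctx_map. rewrite (ctx_map_lift Hbase), Hlast, pair_eta. exact Hz.
Qed.

Lemma chain_extends_locally (c : hom one A) (T : C) (k : nat) :
  (forall j, j < n ->
     sub_le (chain Rs c j) (exs pfst (pbsub (pair (comp (lastv Bs c j) pfst) psnd) (Rs j)))) ->
  k <= n ->
  exists T' (t : hom T' T) (w : hom T' (Ctx A Bs one k)), cover t /\ sat (chain Rs c k) w.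
Proof.
  intros Htotal. induction k as [|k IH]; intros Hk.
  - exists T, (idm T), (bang T). split; [apply cover_id | apply sat_top].
  - destruct (IH ltac:(lia)) as [T1 [t1 [w [Ht1 Hw]]]].
    destruct (sat_exs_elim (sat_le (Htotal k ltac:(lia)) Hw)) as [T2 [t2 [y [Ht2 [Hy Ey]]]]].
    exists T2, (comp t1 t2), y. split; [exact (cover_comp Ht1 Ht2)|].
    apply sat_chain_S. split.
    + rewrite <- Ey. apply sat_comp, Hw.
    + apply sat_pb in Hy. rewrite pair_comp, <- comp_assoc in Hy. exact Hy.
Qed.

Lemma pb_diag_rel_composite_le (c : hom one A) (p : Sub A) :
  sub_le (fullchain Rs Rlast c) (pbsub psnd p) ->
  sub_le (pbsub (pair c c) (rel_composite Rs Rlast)) (pbsub c p).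
Proof.
  intros Hi. set (e := sarr (pbsub (pair c c) (rel_composite Rs Rlast))).
  change (sat (pbsub c p) e). apply sat_pb.
  assert (He : sat (rel_composite Rs Rlast) (comp (pair c c) e)) by apply sat_pb, sat_self.
  destruct (rel_composite_elim He) as [T [t [w [Ht Hw]]]].
  apply (sat_cover Ht). rewrite <- comp_assoc.
  pose proof (sat_le Hi Hw) as Hp. apply sat_pb in Hp. rewrite pair_snd in Hp. exact Hp.
Qed.

Lemma le_pb_diag_rel_composite (c : hom one A) (p : Sub A) :
  sub_le (meet (pbsub pfst (chain Rs c n)) (pbsub psnd p))
         (pbsub (pair (comp (lastv Bs c n) pfst) psnd) Rlast) ->
  (forall j, j < n ->
     sub_le (chain Rs c j) (exs pfst (pbsub (pair (comp (lastv Bs c j) pfst) psnd) (Rs j)))) ->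
  sub_le (pbsub c p) (pbsub (pair c c) (rel_composite Rs Rlast)).
Proof.
  intros Hii Hiii. set (e := sarr (pbsub c p)).
  change (sat (pbsub (pair c c) (rel_composite Rs Rlast)) e). apply sat_pb.
  destruct (chain_extends_locally (sdom (pbsub c p)) Hiii (le_n n)) as [T [t [w [Ht Hw]]]].
  apply (sat_cover Ht). rewrite <- comp_assoc. apply (rel_composite_intro (w := w)).
  assert (Hp : sat p (comp c (comp e t))).
  { rewrite comp_assoc. apply sat_comp, sat_pb, sat_self. }
  assert (Hchain : sat (pbsub pfst (chain Rs c n)) (pair w (comp c (comp e t)))).
  { apply sat_pb. rewrite pair_fst. exact Hw. }
  apply sat_meet. split; [exact Hchain|].
  apply (sat_le Hii), sat_meet. split; [exact Hchain|].
  apply sat_pb. rewrite pair_snd. exact Hp.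
Qed.

End Belief_cycle.

Theorem lemma8 (C : RegCat) (n : nat) (A : C) (Bs : nat -> C)
    (Rs : forall k, Sub (prod (Aobj A Bs k) (Aobj A Bs (S k))))
    (Rlast : Sub (prod (Aobj A Bs n) A)) :
  (forall p : Sub A, exists c : hom one A, belief_hyp Rs Rlast p c) ->
  very_weakly_point_surjective (rel_composite Rs Rlast).
Proof.
  intros Hbelief p. destruct (Hbelief p) as [c [Hi [Hii Hiii]]]. exists c. split.
  - exact (pb_diag_rel_composite_le Hi).
  - exact (le_pb_diag_rel_composite Hii Hiii).
Qed.
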